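(* Let $r\ge2$ be an integer and $n\in\mathbb N$. There is a constant $c_1>0$ depending only on $r$ such that the following holds. Let $g\in\mathbb W^{r-1}$ and suppose that for some fixed $j\in\mathbb Z$, for each $\nu=j,j+1,\dots,j+2(r-2)$ there is a point $t_\nu\in I_\nu$ with $|g(t_\nu)|\le h^{r-1}$. Then $|g(x)|\le c_1h^{r-1}$ for every $x\in\bigcup_{\nu=j}^{j+2(r-2)}I_\nu$.
   Context: $\mathbb W^{m}$ ($m\in\mathbb N$) is the class of $2\pi$-periodic functions whose derivative of order $m-1$ exists and is absolutely continuous and whose $m$-th derivative satisfies $|g^{(m)}|\le1$ a.e. on $\mathbb R$. For fixed $n$: $x_j:=-j\pi/n$ ($j\in\mathbb Z$), $I_j:=[x_j,x_{j-1}]$, $h:=\pi/n$. *)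

From HB Require Import structures.
From mathcomp Require Import all_boot all_order all_algebra.
From mathcomp Require Import all_classical all_reals all_analysis.
Set Implicit Arguments. Unset Strict Implicit. Unset Printing Implicit Defensive.
Import Order.TTheory GRing.Theory Num.Theory.
Local Open Scope classical_set_scope.
Local Open Scope ring_scope.

Definition abs_cont_on (R : realType) (a b : R) (f : R -> R) : Prop :=
  forall e : R, 0 < e -> exists2 d : R, 0 < d &
    forall (N : nat) (u v : nat -> R),
      (forall k, (k < N)%N -> a <= u k /\ u k <= v k /\ v k <= b) ->
      (forall k, (k.+1 < N)%N -> v k <= u k.+1) ->
      \sum_(k < N) (v k - u k) < d ->
      \sum_(k < N) `|f (v k) - f (u k)| < e.

(* The class W^m (m >= 1): 2pi-periodic functions whose (m-1)-th derivative
   exists (everywhere) and is absolutely continuous (on every compact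
   interval), and whose m-th derivative satisfies |g^(m)| <= 1 a.e. *)
Definition Wclass (R : realType) (m : nat) (g : R -> R) : Prop :=
  [/\ (forall x : R, g (x + 2 * pi) = g x),
      (forall k : nat, (k < m.-1)%N -> forall x : R, derivable (derive1n k g) x 1),
      (forall a b : R, a <= b -> abs_cont_on a b (derive1n m.-1 g)) &
      {ae (@lebesgue_measure R), forall x : R,
          derivable (derive1n m.-1 g) x 1 /\ `|derive1n m g x| <= 1}].

Definition hstep (R : realType) (n : nat) : R := pi / n%:R.
Definition xpt (R : realType) (n : nat) (j : int) : R := - (j%:~R * pi) / n%:R.
Definition Ival (R : realType) (n : nat) (j : int) : set R :=
  [set t | xpt R n j <= t <= xpt R n (j - 1)].

From HB Require Import structures.
From mathcomp Require Import all_boot all_order all_algebra.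
From mathcomp Require Import all_classical all_reals all_analysis.
From mathcomp Require Import measurable_realfun qpoly lra ring zify.
Import Order.TTheory GRing.Theory Num.Theory.
Local Open Scope classical_set_scope.
Local Open Scope ring_scope.
Import numFieldNormedType.Exports.

(* Let M = r - 2 and take the nodes t_j, t_{j+2}, ..., t_{j+2M}: they lie in a
   window of length (2M + 1) h and are at least h apart. Split g = (g - P) + P
   with P the Lagrange interpolant of g at the nodes. Lagrange's formula bounds
   P on the window by (M + 1) (2M + 1)^M h^{r-1}. The remainder g - P vanishes at
   the M + 1 nodes, so by Rolle its k-th derivative vanishes in the window for
   every k <= M; its M-th derivative differs from g^(M) by a constant, hence is
   1-Lipschitz, and going back down with the mean value theorem bounds g - P by
   ((2M + 1) h)^{r-1}.
   That g^(M) is 1-Lipschitz is proved by a continuous induction along the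
   interval: off an open set of small measure covering the null set where
   |g^(M+1)| <= 1 fails, the slope of g^(M) is at most 1 + e, and on that open
   set its variation is small by absolute continuity. *)

Section absolute_continuity.
Context {R : realType}.
Notation mu := (@lebesgue_measure R).
Implicit Types (f : R -> R) (U : set R).

Lemma derivable_slope_le {f c e} :
  derivable f c 1 -> `|derive1 f c| <= 1 -> 0 < e ->
  exists2 eta : R, 0 < eta & forall t y, c - eta < t <= c -> c <= y < c + eta ->
    `|f y - f t| <= (1 + e) * (y - t).
Proof.
move=> df f'c e0.
have near_c : exists2 eta : R, 0 < eta & forall y, `|y - c| < eta ->
    `|f y - f c| <= (1 + e) * `|y - c|.
  have := df; rewrite /derivable => /cvgr_dist_lt /(_ e e0).
  rewrite near_withinE => /nbhs_ballP[eta eta0 quotient_near].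
  exists eta => // y yc; have [->|ync] := eqVneq y c.
    by rewrite !subrr normr0 mulr0.
  have yc0 : y - c != 0 by rewrite subr_eq0.
  have := quotient_near (y - c); rewrite /ball /= sub0r normrN => /(_ yc yc0).
  rewrite /GRing.scale /= mulr1 subrK -/(derive f c 1) -derive1E => quotient_c.
  have -> : f y - f c = ((y - c)^-1 * (f y - f c)) * (y - c).
    by rewrite mulrC mulrA mulfV // mul1r.
  rewrite normrM ler_wpM2r //.
  rewrite -[_ * (f y - f c)](subKr (derive1 f c)).
  by rewrite (le_trans (ler_normB _ _)) // lerD // ltW.
have [eta eta0 slope_c] := near_c; exists eta => // t y /andP[ct tc] /andP[cy yc].
have -> : f y - f t = (f y - f c) - (f t - f c) by rewrite opprB addrA subrK.
apply: (le_trans (ler_normB _ _)).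
have -> : y - t = `|y - c| + `|t - c|.
  by rewrite ger0_norm ?subr_ge0 // ler0_norm ?subr_le0 // opprB addrA subrK.
rewrite mulrDr; apply: lerD; apply: slope_c.
  by rewrite ger0_norm ?subr_ge0 //; lra.
by rewrite ler0_norm ?subr_le0 //; lra.
Qed.

Lemma itv_chain_le {N : nat} {u v : nat -> R} :
  (forall k, (k < N)%N -> u k <= v k) ->
  (forall k, (k.+1 < N)%N -> v k <= u k.+1) ->
  forall i j, (i < j)%N -> (j < N)%N -> v i <= u j.
Proof.
move=> huv hvu i; elim=> // j IH.
rewrite ltnS leq_eqVlt => /orP[/eqP <-|ij] jN; first exact: hvu.
apply: (le_trans (IH ij (ltnW jN))).
by apply: (le_trans (huv j (ltnW jN))); exact: hvu.
Qed.

Lemma sum_itv_le_measure U (N : nat) (u v : nat -> R) : measurable U ->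
  (forall k, (k < N)%N -> u k <= v k) ->
  (forall k, (k.+1 < N)%N -> v k <= u k.+1) ->
  (forall k, (k < N)%N -> `[u k, v k[ `<=` U) ->
  ((\sum_(k < N) (v k - u k))%:E <= mu U)%E.
Proof.
move=> mU huv hvu hU.
pose F (k : 'I_N) : set R := `[u k, v k[%classic.
have tF : trivIset setT F.
  move=> i j _ _ [x [/= xi xj]]; apply: val_inj.
  move: xi xj; rewrite /F /= !in_itv /= => /andP[ui xvi] /andP[uj xvj].
  have [lij|lji|//] := ltngtP i j.
  - exfalso; have := itv_chain_le huv hvu _ _ lij (ltn_ord j); lra.
  - exfalso; have := itv_chain_le huv hvu _ _ lji (ltn_ord i); lra.
have mF k : measurable (F k) by exact: measurable_itv.
have lenF : (\sum_(k < N) mu (F k) = (\sum_(k < N) (v k - u k))%:E)%E.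
  rewrite -sumEFin; apply: eq_bigr => k _.
  rewrite /F lebesgue_measure_itv /= lte_fin; case: ltP => // vu.
  have /eqP -> : u k == v k by rewrite eq_le vu huv.
  by rewrite subrr.
rewrite -lenF -(measure_bigsetU_ord mu xpredT mF tF).
apply: le_measure; rewrite ?inE //.
  by apply: bigsetU_measurable => k _; exact: mF.
apply: (@big_ind _ (fun S : set R => S `<=` U)) => //.
  by move=> A B AU BU x [/AU|/BU].
by move=> k _; exact: hU.
Qed.

Lemma ae_open_cover {P : R -> Prop} {d : R} : 0 < d -> {ae mu, forall x, P x} ->
  exists U, [/\ open U, (mu U < d%:E)%E & forall x, ~ U x -> P x].
Proof.
move=> d0 [A [mA A0 notPA]].
have Afin : (mu A < +oo)%E by rewrite A0 ltry.
have [U [oU AU UA]] := lebesgue_regularity_outer mA Afin d0.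
exists U; split => //; last first.
  by move=> x Ux; apply: contrapT => /notPA /AU.
have mU := open_measurable oU.
have UAD : U `<=` A `|` (U `\` A).
  by move=> x Ux; case: (pselect (A x)) => Ax; [left|right].
apply: le_lt_trans (le_measure mu _ _ UAD) _; rewrite ?inE //.
  by apply: measurableU => //; exact: measurableD.
apply: le_lt_trans (measureU2 _ mA (measurableD mU mA)) _.
by rewrite [X in (X + _)%E](_ : _ = 0%E) ?add0e //; exact: A0.
Qed.

(* The invariant of the continuous induction below: the increment of [f] on
   [[a, s]] is split into a part of slope at most [1 + e] and the variation of
   [f] on finitely many non-overlapping intervals inside [U]. *)
Definition split_increment f U (a e s : R) : Prop :=
  exists N (u v : nat -> R),
   [/\ forall k, (k < N)%N -> a <= u k /\ u k <= v k /\ v k <= s,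
       forall k, (k.+1 < N)%N -> v k <= u k.+1,
       forall k, (k < N)%N -> `[u k, v k[ `<=` U &
       `|f s - f a| <= (1 + e) * (s - a) + \sum_(k < N) `|f (v k) - f (u k)|].

Lemma split_increment_refl f U a e : split_increment f U a e a.
Proof.
exists 0%N, (fun _ => a), (fun _ => a); split => //.
by rewrite !subrr normr0 mulr0 big_ord0 addr0.
Qed.

Lemma split_increment_slope {f U a e t y} : 0 <= e ->
  split_increment f U a e t -> t <= y -> `|f y - f t| <= (1 + e) * (y - t) ->
  split_increment f U a e y.
Proof.
move=> e0 [N [u [v [uv_in uv_chain uv_U incr]]]] ty fty.
exists N, u, v; split => //.
  by move=> k /uv_in [? [? ?]]; do 2?split => //; exact: le_trans ty.
have -> : f y - f a = (f y - f t) + (f t - f a) by rewrite addrA subrK.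
have -> : (1 + e) * (y - a) = (1 + e) * (y - t) + (1 + e) * (t - a).
  by rewrite -mulrDr addrA subrK.
by rewrite (le_trans (ler_normD _ _)) // -addrA lerD.
Qed.

Lemma split_increment_cover {f U a e t y} : 0 <= e -> a <= t ->
  split_increment f U a e t -> t <= y -> `[t, y[ `<=` U ->
  split_increment f U a e y.
Proof.
move=> e0 at_ [N [u [v [uv_in uv_chain uv_U incr]]]] ty tyU.
pose u' k := if k == N then t else u k.
pose v' k := if k == N then y else v k.
have u'v'E k : (k < N)%N -> u' k = u k /\ v' k = v k.
  by move=> kN; rewrite /u' /v' ltn_eqF.
exists N.+1, u', v'; split.
- move=> k; rewrite ltnS leq_eqVlt => /orP[/eqP ->|kN].
    by rewrite /u' /v' eqxx.
  have [-> ->] := u'v'E k kN; have [? [? ?]] := uv_in k kN.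
  by do 2?split => //; exact: le_trans ty.
- move=> k; rewrite ltnS leq_eqVlt => /orP[/eqP kN|kN].
    have kN' : (k < N)%N by rewrite -kN.
    have [_ ->] := u'v'E k kN'.
    by rewrite /u' -kN eqxx; have [_ [_ ?]] := uv_in k kN'.
  by have [_ ->] := u'v'E k (ltnW kN); have [-> _] := u'v'E _ kN; exact: uv_chain.
- move=> k; rewrite ltnS leq_eqVlt => /orP[/eqP ->|kN].
    by rewrite /u' /v' eqxx.
  by have [-> ->] := u'v'E k kN; exact: uv_U.
- rewrite big_ord_recr /= /u' /v' eqxx.
  under eq_bigr => k _ do rewrite (ltn_eqF (ltn_ord k)).
  have -> : f y - f a = (f y - f t) + (f t - f a) by rewrite addrA subrK.
  rewrite (le_trans (ler_normD _ _)) // addrA addrC lerD2l.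
  by rewrite (le_trans incr) // lerD2r ler_wpM2l ?addr_ge0 // lerD2r.
Qed.

Lemma real_induction {P : R -> Prop} {a b : R} : a <= b ->
  (forall c, a <= c <= b -> (forall y, a <= y < c -> P y) ->
     exists2 eta : R, 0 < eta & forall y, c <= y < c + eta -> P y) ->
  P b.
Proof.
move=> ab step.
pose G := [set s | s <= b /\ forall y, a <= y < s -> P y].
have Ga : G a by split => // y /andP[ay /(le_lt_trans ay)]; rewrite ltxx.
have supG : has_sup G by split; [exists a | exists b => s []].
set c := sup G.
have ac : a <= c := sup_upper_bound supG Ga.
have cb : c <= b by apply: ge_sup => [|s []]; first by exists a.
have below_c y : a <= y < c -> P y.
  move=> /andP[ay yc]; have [s [_ Ps] ys] := sup_gt (ex_intro _ a Ga) yc.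
  by apply: Ps; rewrite ay.
have [eta eta0 after_c] := step c (introT andP (conj ac cb)) below_c.
have cP y : a <= y < c + eta -> P y.
  case/andP=> ay yceta; case: (ltP y c) => yc.
    by apply: below_c; rewrite ay yc.
  by apply: after_c; rewrite yc yceta.
suff -> : b = c by apply: cP; rewrite ac ltrDl.
apply/eqP; rewrite eq_le cb andbT leNgt; apply/negP => cltb.
have GcP : G (Num.min b (c + eta)).
  split; first by rewrite ge_min lexx.
  by move=> y /andP[ay]; rewrite lt_min => /andP[_ yc]; apply: cP; rewrite ay.
by have := sup_upper_bound supG GcP; rewrite leNgt lt_min cltb ltrDl eta0.
Qed.

Lemma left_approach {P : R -> Prop} {a c eta : R} : P a -> a <= c -> 0 < eta ->
  (forall y, a <= y < c -> P y) -> exists t, [/\ a <= t <= c, c - eta < t & P t].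
Proof.
move=> Pa ac eta0 Pac; have [ca|ac'] := leP (c - eta / 2) a.
  by exists a; split => //; rewrite ?lexx ?ac //; lra.
by exists (c - eta / 2); split; [lra | lra | apply: Pac; lra].
Qed.

Lemma split_increment_step f U (a e c : R) : 0 < e -> open U ->
  (U c \/ (derivable f c 1 /\ `|derive1 f c| <= 1)) -> a <= c ->
  (forall y, a <= y < c -> split_increment f U a e y) ->
  exists2 eta : R, 0 < eta &
    forall y, c <= y < c + eta -> split_increment f U a e y.
Proof.
move=> e0 oU Uc_or_slope ac below_c.
have approach eta : 0 < eta -> exists t,
    [/\ a <= t <= c, c - eta < t & split_increment f U a e t].
  by move=> eta0; exact: left_approach (split_increment_refl f U a e) ac eta0 below_c.
case: Uc_or_slope => [Uc|[df f'c]].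
  have /nbhs_ballP[eta eta0 ballU] : nbhs c U by apply: open_nbhs_nbhs.
  have [t [/andP[at_ tc] ct Pt]] := approach _ eta0.
  exists eta => // y /andP[cy yc].
  apply: (split_increment_cover (ltW e0) at_ Pt); first exact: le_trans cy.
  move=> z; rewrite /= in_itv /= => /andP[tz zy]; apply: ballU.
  by rewrite /ball /= ltr_norml; apply/andP; split; lra.
have [eta eta0 slope] := derivable_slope_le df f'c e0.
have [t [/andP[at_ tc] ct Pt]] := approach _ eta0.
exists eta => // y /andP[cy yc].
apply: (split_increment_slope (ltW e0) Pt); first exact: le_trans cy.
by apply: slope; rewrite ?ct ?tc ?cy ?yc.
Qed.

Lemma abs_cont_increment_le {f} {a b e : R} : 0 < e -> a <= b ->
  abs_cont_on a b f ->
  {ae mu, forall x, derivable f x 1 /\ `|derive1 f x| <= 1} ->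
  `|f b - f a| <= (1 + e) * (b - a) + e.
Proof.
move=> e0 ab /(_ e e0) [d d0 AC] /(ae_open_cover d0) [U [oU muU slope]].
have : split_increment f U a e b.
  apply: (real_induction ab) => c /andP[ac _] below_c.
  apply: split_increment_step => //.
  by have [Uc|/slope] := pselect (U c); [left|right].
case=> N [u [v [uv_in uv_chain uv_U incr]]]; rewrite (le_trans incr) // lerD2l ltW //.
apply: AC => [k /uv_in [? [? ?]]|//|]; first by do 2?split => //; exact: le_trans ab.
rewrite -lte_fin (le_lt_trans _ muU) // sum_itv_le_measure //.
- exact: open_measurable.
- by move=> k /uv_in [_ []].
Qed.

Lemma abs_cont_lipschitz f :
  (forall a b : R, a <= b -> abs_cont_on a b f) ->
  {ae mu, forall x, derivable f x 1 /\ `|derive1 f x| <= 1} ->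
  forall x y : R, `|f y - f x| <= `|y - x|.
Proof.
move=> ac slope.
suff le_xy x y : x <= y -> `|f y - f x| <= y - x.
  move=> x y; have [xy|/ltW yx] := leP x y.
    exact: le_trans (le_xy _ _ xy) (ler_norm _).
  by rewrite distrC (distrC y); exact: le_trans (le_xy _ _ yx) (ler_norm _).
move=> xy; apply/ler_addgt0Pr => e e0.
have yx1 : 0 < y - x + 1 by lra.
have e'0 : 0 < e / (y - x + 1) by rewrite divr_gt0.
rewrite (le_trans (abs_cont_increment_le e'0 xy (ac _ _ xy) slope)) //.
have -> : (1 + e / (y - x + 1)) * (y - x) + e / (y - x + 1)
   = (y - x) + e / (y - x + 1) * (y - x + 1) by ring.
by rewrite divfK ?gt_eqF.
Qed.

Lemma Wclass_lipschitz (m : nat) (g : R -> R) : Wclass m.+1 g ->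
  (forall k, (k < m)%N -> forall x, derivable (derive1n k g) x 1) /\
  (forall x y, `|derive1n m g y - derive1n m g x| <= `|y - x|).
Proof.
by case=> _ dg ac slope; split => //; exact: abs_cont_lipschitz.
Qed.

End absolute_continuity.

Section higher_derivatives.
Context {R : realType}.
Implicit Types f g : R -> R.

Lemma derive1n_horner (q : {poly R}) k :
  derive1n k (horner q) = horner (q^`(k)).
Proof.
elim: k => [|k IH]; first by rewrite derive1n0 derivn0.
by rewrite derive1nS IH -derivE derivnS.
Qed.

Lemma derivable_horner_derive1n (q : {poly R}) k x :
  derivable (derive1n k (horner q)) x 1.
Proof. by rewrite derive1n_horner; exact: derivable_horner. Qed.

Lemma derive1nB f g n :
  (forall k, (k < n)%N -> forall x, derivable (derive1n k f) x 1) ->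
  (forall k, (k < n)%N -> forall x, derivable (derive1n k g) x 1) ->
  derive1n n (f - g) = derive1n n f - derive1n n g.
Proof.
elim: n => [|n IH] df dg; first by rewrite !derive1n0.
have df' k : (k < n)%N -> forall x, derivable (derive1n k f) x 1.
  by move/ltnW; exact: df.
have dg' k : (k < n)%N -> forall x, derivable (derive1n k g) x 1.
  by move/ltnW; exact: dg.
rewrite !derive1nS (IH df' dg'); apply/funext => x.
rewrite -[RHS]/(derive1 _ x - derive1 _ x) !derive1E deriveB //.
  exact: df.
exact: dg.
Qed.

Lemma derivable_le_lipschitz {f} {lo hi B : R} :
  (forall x, derivable f x 1) ->
  (forall c, lo <= c <= hi -> `|derive1 f c| <= B) ->
  forall x z, lo <= x <= hi -> lo <= z <= hi -> `|f x - f z| <= B * `|x - z|.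
Proof.
move=> df f'B.
suff le_zx x z : lo <= x <= hi -> lo <= z <= hi -> z <= x ->
    `|f x - f z| <= B * `|x - z|.
  move=> x z xI zI; have [zx|/ltW xz] := leP z x; first exact: le_zx.
  by rewrite distrC (distrC x); exact: le_zx.
move=> /andP[lx xh] /andP[lz zh] zx.
have f'E y : y \in `]z, x[ -> is_derive y 1 f (derive1 f y).
  by move=> _; rewrite derive1E; exact: derivableP.
have fc : {within `[z, x], continuous f}.
  by apply: derivable_within_continuous => y _; exact: df.
have [c + ->] := MVT_segment zx f'E fc; rewrite in_itv /= => /andP[zc cx].
by rewrite normrM ler_wpM2r // f'B // (le_trans lz zc) (le_trans cx xh).
Qed.

Lemma derive1n_sorted_zeros {f} {M m : nat} {p : nat -> R} {lo hi : R} :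
  (forall k, (k < M)%N -> forall x, derivable (derive1n k f) x 1) ->
  (forall i, (i.+1 < m)%N -> p i < p i.+1) ->
  (forall i, (i < m)%N -> lo <= p i <= hi /\ f (p i) = 0) ->
  forall k, (k <= M)%N -> exists q : nat -> R,
    (forall i, (i.+1 < m - k)%N -> q i < q i.+1) /\
    (forall i, (i < m - k)%N -> lo <= q i <= hi /\ derive1n k f (q i) = 0).
Proof.
move=> df p_sorted p_zeros; elim=> [|k IH] kM.
  exists p; split => i; rewrite subn0 ?derive1n0; first exact: p_sorted.
  exact: p_zeros.
have [q [q_sorted q_zeros]] := IH (ltnW kM).
have dfk x : derivable (derive1n k f) x 1 by exact: df.
have rolle i : exists c : R, (i.+1 < m - k)%N ->
    q i < c < q i.+1 /\ derive1n k.+1 f c = 0.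
  case: (boolP (i.+1 < m - k)%N) => im; last by exists 0.
  have [_ z0] := q_zeros i (ltnW im); have [_ z1] := q_zeros i.+1 im.
  have fc : {within `[q i, q i.+1], continuous (derive1n k f)}.
    by apply: derivable_within_continuous => y _; exact: dfk.
  have [c cI cd] :=
    Rolle (q_sorted i im) (fun x _ => dfk x) fc (etrans z0 (esym z1)).
  exists c => _; split; first by move: cI; rewrite in_itv.
  by rewrite derive1nS derive1E; exact: (@derive_val _ _ _ _ _ _ _ cd).
have [q' Hq'] := choice rolle.
exists q'; split => i im.
  have [/andP[_ a1] _] := Hq' i ltac:(lia).
  have [/andP[a2 _] _] := Hq' i.+1 ltac:(lia).
  exact: lt_trans a1 a2.
have [/andP[a1 a2] ->] := Hq' i ltac:(lia); split => //.
have [/andP[l1 _] _] := q_zeros i ltac:(lia).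
have [/andP[_ u1] _] := q_zeros i.+1 ltac:(lia).
by rewrite (le_trans l1 (ltW a1)) (le_trans (ltW a2) u1).
Qed.

Lemma sorted_zeros_bound {f} {M : nat} {p : nat -> R} {lo hi : R} :
  (forall k, (k < M)%N -> forall x, derivable (derive1n k f) x 1) ->
  (forall x y, `|derive1n M f y - derive1n M f x| <= `|y - x|) ->
  (forall i, (i < M)%N -> p i < p i.+1) ->
  (forall i, (i <= M)%N -> lo <= p i <= hi /\ f (p i) = 0) ->
  forall x, lo <= x <= hi -> `|f x| <= (hi - lo) ^+ M.+1.
Proof.
move=> df lipM p_sorted p_zeros.
have zeros := derive1n_sorted_zeros (m := M.+1) df p_sorted p_zeros.
have diam x y : lo <= x <= hi -> lo <= y <= hi -> `|x - y| <= hi - lo.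
  by move=> /andP[? ?] /andP[? ?]; rewrite ler_norml; apply/andP; split; lra.
suff bound j : (j <= M)%N -> forall x, lo <= x <= hi ->
    `|derive1n (M - j) f x| <= (hi - lo) ^+ j.+1.
  by move=> x xI; have := bound M (leqnn M) x xI; rewrite subnn derive1n0.
elim: j => [|j IH] jM x xI.
  have [q [_ qz]] := zeros M (leqnn M); have [qI q0] := qz 0%N ltac:(lia).
  rewrite subn0 expr1 -[derive1n M f x]subr0 -q0.
  exact: le_trans (lipM _ _) (diam _ _ xI qI).
have [q [_ qz]] := zeros (M - j.+1)%N (leq_subr _ _).
have [qI q0] := qz 0%N ltac:(lia).
have dfMj y : derivable (derive1n (M - j.+1) f) y 1 by apply: df; lia.
have f'bound c : lo <= c <= hi ->
    `|derive1 (derive1n (M - j.+1) f) c| <= (hi - lo) ^+ j.+1.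
  by move=> cI; rewrite -derive1nS -subSn // subSS; exact: IH (ltnW jM) c cI.
rewrite -[derive1n _ f x]subr0 -q0.
apply: le_trans (derivable_le_lipschitz dfMj f'bound _ _ xI qI) _.
rewrite [leRHS]exprS [leLHS]mulrC ler_wpM2r ?diam //.
by rewrite exprn_ge0 // (le_trans _ (diam _ _ xI xI)).
Qed.

End higher_derivatives.

Lemma size_derivn_leq1 (R : nzRingType) (p : {poly R}) n :
  (size p <= n.+1)%N -> (size p^`(n) <= 1)%N.
Proof.
move=> sp; apply/leq_sizeP => i i1.
by rewrite coef_derivn nth_default ?mul0rn //; apply: leq_trans sp _; lia.
Qed.

Section interpolation.
Context {K : fieldType}.
Implicit Types (x y : nat -> K) (n : nat).

Definition lagrange_interp n x y : {poly K} :=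
  \sum_(i < n) y i *: (tnth (n.-lagrange x) i : {poly K}).

Lemma size_lagrange_interp n x y : (size (lagrange_interp n x y) <= n)%N.
Proof.
apply: leq_trans (size_sum _ _ _) _; apply/bigmax_leqP => i _.
exact: leq_trans (size_scale_leq _ _) (size_npoly _).
Qed.

Lemma lagrange_interp_sample {n x y} :
  injective x -> forall k : 'I_n, (lagrange_interp n x y).[x k] = y k.
Proof.
move=> x_inj k; have n_gt0 : (0 < n)%N := leq_ltn_trans (leq0n k) (ltn_ord k).
rewrite horner_sum (bigD1 k) //= big1 ?addr0 => [|i ik].
  by rewrite hornerZ lagrange_sample // eqxx mulr1.
by rewrite hornerZ lagrange_sample // (negPf ik) mulr0.
Qed.

End interpolation.

Section interpolation_bound.
Context {R : realFieldType}.
Context {n : nat} {x : nat -> R} {lo hi h : R}.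
Hypotheses (x_inj : injective x) (h_gt0 : 0 < h).
Hypothesis x_sep : forall i j : 'I_n, i != j -> h <= `|x i - x j|.
Hypothesis x_range : forall i : 'I_n, lo <= x i <= hi.

Lemma lagrange_bound (i : 'I_n) t : lo <= t <= hi ->
  `|(tnth (n.-lagrange x) i : {poly R}).[t]| <= ((hi - lo) / h) ^+ n.-1.
Proof.
move=> tI; have n_gt0 : (0 < n)%N := leq_ltn_trans (leq0n i) (ltn_ord i).
have cardn1 : n.-1 = #|[pred j : 'I_n | j != i]| by rewrite cardC1 card_ord.
rewrite lagrangeE //= hornerM hornerC !horner_prod normrM normfV !normr_prod.
under eq_bigr do rewrite hornerXsubC.
under [X in _ * X]eq_bigr do rewrite hornerXsubC.
rewrite mulrC expr_div_n ler_pM ?invr_ge0 ?prodr_ge0 //.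
  rewrite cardn1 -prodr_const; apply: ler_prod => j _; rewrite normr_ge0 /=.
  have /andP[? ?] := x_range j; move: tI => /andP[? ?].
  by rewrite ler_norml; apply/andP; split; lra.
rewrite lef_pV2 ?posrE ?exprn_gt0 //; last first.
  apply: prodr_gt0 => j ji; apply: lt_le_trans h_gt0 _.
  by apply: x_sep; rewrite eq_sym.
rewrite cardn1 -prodr_const; apply: ler_prod => j ji; rewrite ltW //=.
by apply: x_sep; rewrite eq_sym.
Qed.

Lemma lagrange_interp_bound {y : nat -> R} {Y : R} : (forall i : 'I_n, `|y i| <= Y) ->
  forall t, lo <= t <= hi ->
  `|(lagrange_interp n x y).[t]| <= n%:R * Y * ((hi - lo) / h) ^+ n.-1.
Proof.
move=> yY t tI; rewrite horner_sum (le_trans (ler_norm_sum _ _ _)) //.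
rewrite -mulrA mulr_natl -[n in _ *+ n]card_ord -sumr_const.
apply: ler_sum => i _.
by rewrite hornerZ normrM ler_pM ?lagrange_bound.
Qed.

End interpolation_bound.

Section interpolation_estimate.
Context {R : realType}.
Implicit Types g : R -> R.

Lemma sep_dist {p : nat -> R} {h : R} :
  (forall i i', (i < i')%N -> p i' + h <= p i) ->
  forall i i', i != i' -> h <= `|p i - p i'|.
Proof.
move=> p_sep i i'; rewrite neq_ltn => /orP[/p_sep|/p_sep] ?.
  by apply: le_trans (ler_norm _); lra.
by rewrite -normrN; apply: le_trans (ler_norm _); lra.
Qed.

Lemma sep_injective {p : nat -> R} {h : R} : 0 < h ->
  (forall i i', (i < i')%N -> p i' + h <= p i) -> injective p.
Proof.
move=> h0 /sep_dist p_dist i i' pii'; apply/eqP; apply: contraT => /p_dist.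
by rewrite pii' subrr normr0 leNgt h0.
Qed.

Lemma interpolation_bound {g} {M : nat} {p : nat -> R} {lo hi h Y : R} :
  (forall k, (k < M)%N -> forall x, derivable (derive1n k g) x 1) ->
  (forall x y, `|derive1n M g y - derive1n M g x| <= `|y - x|) ->
  0 < h -> (forall i i', (i < i')%N -> p i' + h <= p i) ->
  (forall i, (i <= M)%N -> lo <= p i <= hi /\ `|g (p i)| <= Y) ->
  forall x, lo <= x <= hi ->
  `|g x| <= (hi - lo) ^+ M.+1 + M.+1%:R * Y * ((hi - lo) / h) ^+ M.
Proof.
move=> dg lipM h0 p_sep p_small x xI.
have p_inj := sep_injective h0 p_sep.
pose P := lagrange_interp M.+1 p (fun i => g (p i)).
have psiE k : (k <= M)%N ->
    derive1n k (g - horner P) = derive1n k g - horner P^`(k).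
  move=> kM; rewrite -derive1n_horner; apply: derive1nB => i ik y.
    by apply: dg; lia.
  exact: derivable_horner_derive1n.
have dpsi k : (k < M)%N -> forall y, derivable (derive1n k (g - horner P)) y 1.
  move=> kM y; rewrite psiE ?(ltnW kM) //.
  by apply: derivableB; [exact: dg | exact: derivable_horner].
have lip_psi y z :
    `|derive1n M (g - horner P) z - derive1n M (g - horner P) y| <= `|z - y|.
  rewrite psiE // !fctE /= [P^`(M)]size1_polyC; last first.
    by rewrite size_derivn_leq1 ?size_lagrange_interp.
  by rewrite !hornerC opprB addrA subrK lipM.
have psi_zeros i : (i <= M)%N ->
    lo <= p (M - i)%N <= hi /\ (g - horner P) (p (M - i)%N) = 0.
  move=> iM; have [pI _] := p_small (M - i)%N (leq_subr _ _); split => //.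
  have iM' : (M - i < M.+1)%N by lia.
  by rewrite !fctE /= /P (lagrange_interp_sample p_inj (Ordinal iM')) subrr.
have z_sorted i : (i < M)%N -> p (M - i)%N < p (M - i.+1)%N.
  by move=> iM; have := p_sep (M - i.+1)%N (M - i)%N ltac:(lia); lra.
have psi_bound := sorted_zeros_bound (p := fun i => p (M - i)%N)
  dpsi lip_psi z_sorted psi_zeros _ xI.
have P_bound := lagrange_interp_bound (n := M.+1) (y := fun i => g (p i))
  p_inj h0 (fun i j => sep_dist p_sep i j)
  (fun i => (p_small i (ltn_ord i)).1) (fun i => (p_small i (ltn_ord i)).2) x xI.
have -> : g x = (g - horner P) x + P.[x] by rewrite !fctE /= subrK.
by rewrite (le_trans (ler_normD _ _)) // lerD.
Qed.

End interpolation_estimate.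

Section grid.
Context {R : realType}.
Variable n : nat.
Local Notation h := (@hstep R n).
Local Notation x := (@xpt R n).
Local Notation I := (@Ival R n).

Lemma hstep_ge0 : 0 <= h.
Proof. by rewrite divr_ge0 ?pi_ge0. Qed.

Lemma xpt_in_Ival (j : int) : I j (x j).
Proof.
rewrite /Ival /=; have -> : x (j - 1) = x j + h by rewrite /xpt /hstep intrD; ring.
by rewrite lexx lerDl hstep_ge0.
Qed.

Lemma Ival_bounds {j : int} {k : nat} {t : R} : I (j + k%:Z) t ->
  x (j - 1) - (k%:R + 1) * h <= t <= x (j - 1) - k%:R * h.
Proof.
rewrite /Ival /=; have -> : x (j + k%:Z) = x (j - 1) - (k%:R + 1) * h.
  by rewrite /xpt /hstep !intrD pmulrn; ring.
have -> // : x (j + k%:Z - 1) = x (j - 1) - k%:R * h.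
by rewrite /xpt /hstep !intrD pmulrn; ring.
Qed.

Lemma Ival_sep {j : int} {k1 k2 : nat} {t1 t2 : R} : (k1 + 2 <= k2)%N ->
  I (j + k1%:Z) t1 -> I (j + k2%:Z) t2 -> t2 + h <= t1.
Proof.
move=> k12 /Ival_bounds/andP[t1_ge _] /Ival_bounds/andP[_ t2_le].
have : k1%:R + 2 <= k2%:R :> R by rewrite -natrD ler_nat.
by have := hstep_ge0; nra.
Qed.

Lemma Ival_window {j : int} {M k : nat} {t : R} : (k <= 2 * M)%N -> I (j + k%:Z) t ->
  x (j - 1) - (2 * M + 1)%:R * h <= t <= x (j - 1).
Proof.
move=> kM /Ival_bounds/andP[t_ge t_le].
have kK : k%:R + 1 <= (2 * M + 1)%:R :> R by rewrite natrD lerD2r ler_nat.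
have k_ge0 : 0 <= k%:R :> R := ler0n _ _.
by have h_ge0 := hstep_ge0; apply/andP; split; nra.
Qed.

End grid.

Theorem lemma1 (R : realType) (r : nat) : (2 <= r)%N ->
  exists2 c1 : R, 0 < c1 &
    forall n : nat, (0 < n)%N ->
    forall g : R -> R, Wclass (r - 1) g ->
    forall j : int,
      (forall k : nat, (k <= 2 * (r - 2))%N ->
         exists2 t : R, @Ival R n (j + k%:Z) t & `|g t| <= (@hstep R n) ^+ (r - 1)) ->
      forall x : R,
        (exists2 k : nat, (k <= 2 * (r - 2))%N & @Ival R n (j + k%:Z) x) ->
        `|g x| <= c1 * (@hstep R n) ^+ (r - 1).
Proof.
case: r => [|[|M]] // _; rewrite !subSS !subn0.
pose K : R := (2 * M + 1)%:R.
have K_gt0 : 0 < K by rewrite ltr0n addn1.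
exists (K ^+ M.+1 + M.+1%:R * K ^+ M); first by rewrite addr_gt0 ?mulr_gt0 ?exprn_gt0.
move=> n n_gt0 g /Wclass_lipschitz[dg lipM] j small x [k kM xI].
set h := hstep R n; have h_gt0 : 0 < h by rewrite divr_gt0 ?pi_gt0 ?ltr0n.
(* Nodes past [2 * M] are dummies: qpoly's Lagrange basis wants nodes that are
   injective on all of [nat]. *)
have nodes k' : exists t,
    Ival n (j + k'%:Z) t /\ ((k' <= 2 * M)%N -> `|g t| <= h ^+ M.+1).
  have [k'M|_] := boolP (k' <= 2 * M)%N.
    by have [t ? ?] := small k' k'M; exists t.
  by exists (xpt R n (j + k'%:Z)); split=> //; exact: xpt_in_Ival.
have [T T_spec] := choice nodes.
pose lo := xpt R n (j - 1) - K * h; pose hi := xpt R n (j - 1).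
pose p i := T (2 * i)%N.
have p_sep i i' : (i < i')%N -> p i' + h <= p i.
  move=> ii'; apply: (Ival_sep n _ (T_spec (2 * i)%N).1 (T_spec (2 * i')%N).1).
  by lia.
have p_small i : (i <= M)%N -> lo <= p i <= hi /\ `|g (p i)| <= h ^+ M.+1.
  have [Ti Ti_small] := T_spec (2 * i)%N; move=> iM; split.
    by apply: (Ival_window n (M := M) _ Ti); lia.
  by apply: Ti_small; lia.
have hi_lo : hi - lo = K * h by rewrite /hi /lo opprB addrC subrK.
have := interpolation_bound dg lipM h_gt0 p_sep p_small x (Ival_window n kM xI).
by rewrite hi_lo mulfK ?gt_eqF // exprMn; nra.
Qed.
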